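(* Let $k\ge1$, $d\ge1$ and $n_1,\dots,n_k\ge2$ be integers and $n:=n_1\cdots n_k$. There exists a $\Sigma_k(n_1,\dots,n_k)$-equivariant (continuous) map \[ C_k(d;n_1,\dots,n_k)\longrightarrow F(\mathbb{R}^d,n), \] where $\Sigma_k(n_1,\dots,n_k)$ acts on $F(\mathbb{R}^d,n)$ via the inclusion $\Sigma_k(n_1,\dots,n_k)\subseteq S_n$.
   Context: $F(\mathbb{R}^d,m)$ is the configuration space of $m$ pairwise distinct points in $\mathbb{R}^d$ with $S_m$ acting by $\tau\cdot(y_1,\dots,y_m)=(y_{\tau^{-1}(1)},\dots,y_{\tau^{-1}(m)})$. Wreath product action: if $G$ acts on $X$ and $S_m$ on $Y$, $G^{\times m}\rtimes S_m$ ($S_m$ permuting factors) acts on $X^{\times m}\times Y$ by $(g_1,\dots,g_m;\sigma)\cdot(x_1,\dots,x_m;y)=(g_1x_{\sigma^{-1}(1)},\dots,g_mx_{\sigma^{-1}(m)};\sigma y)$. $\Sigma_1(n_1)=S_{n_1}$, $\Sigma_k(n_1,\dots,n_k)=\Sigma_{k-1}(n_1,\dots,n_{k-1})^{\times n_k}\rtimes S_{n_k}$. $C_1(d;n_1)=F(\mathbb{R}^d,n_1)$, $C_k(d;n_1,\dots,n_k)=C_{k-1}(d;n_1,\dots,n_{k-1})^{\times n_k}\times F(\mathbb{R}^d,n_k)$ with the inductively defined wreath product action. Inclusion $\Sigma_k(n_1,\dots,n_k)\subseteq S_n$ (as the automorphisms of the rooted tree permuting its $n$ leaves): for $k=1$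 it is the identity; for $k\ge2$, with $n'=n_1\cdots n_{k-1}$, identify $[n]$ with $[n']\times[n_k]$ via $(i,j)\leftrightarrow(j-1)n'+i$, and let $(\Sigma_1,\dots,\Sigma_{n_k};\sigma)$ act by $(i,j)\mapsto(\Sigma_{\sigma(j)}(i),\sigma(j))$, where each $\Sigma_l\in\Sigma_{k-1}(n_1,\dots,n_{k-1})\subseteq S_{n'}$ inductively. *)

From HB Require Import structures.
From mathcomp Require Import all_boot all_order all_algebra all_fingroup.
From mathcomp Require Import all_classical all_reals all_analysis.
Set Implicit Arguments. Unset Strict Implicit. Unset Printing Implicit Defensive.
Import Order.TTheory GRing.Theory Num.Theory.
Import numFieldNormedType.Exports.

(* A list [rs] = [:: n_k; ...; n_1] (REVERSED order, outermost
   level first) describes the iterated wreath product.  The empty list is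
   level 0: Sigma_0 = trivial group, C_0 = a point (0 points in R^d), one leaf.
   Points are indexed from 0. *)

Fixpoint Npts (rs : seq nat) : nat :=
  match rs with [::] => 0%N | m :: rs' => (Npts rs' * m + m)%N end.

Fixpoint nleaves (rs : seq nat) : nat :=
  match rs with [::] => 1%N | m :: rs' => (nleaves rs' * m)%N end.

(* Elements of Sigma_k = Sigma_{k-1}^{n_k} x| S_{n_k}  (Sigma_0 = unit). *)
Fixpoint Sig (rs : seq nat) : Type :=
  match rs with [::] => unit | m :: rs' => (('I_m -> Sig rs') * 'S_m)%type end.

(* Forward map on point indices of C_k describing the action:
   (g . x)_{posmap g p} = x_p. Block j occupies positions
   [j N', (j+1) N'), the last block occupies [m N', m N' + m). *)
Fixpoint posmap (rs : seq nat) : Sig rs -> nat -> nat :=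
  match rs return Sig rs -> nat -> nat with
  | [::] => fun _ p => p
  | m :: rs' => fun g p =>
      let N' := Npts rs' in
      if (p < N' * m)%N then
        match (insub (p %/ N')%N : option 'I_m) with
        | Some j => let l := g.2 j in (l * N' + posmap (g.1 l) (p %% N'))%N
        | None => p end
      else
        match (insub (p - N' * m)%N : option 'I_m) with
        | Some i => (N' * m + g.2 i)%N
        | None => p end
  end.

(* The inclusion Sigma_k <= S_n as the permutation of leaves (forward map):
   leaf (i, j) <-> j n' + i (0-indexed) is sent to
   (iota(g_{s(j)}) i, s(j)). *)
Fixpoint leafmap (rs : seq nat) : Sig rs -> nat -> nat :=
  match rs return Sig rs -> nat -> nat with
  | [::] => fun _ p => p
  | m :: rs' => fun g p =>
      let n' := nleaves rs' in
      match (insub (p %/ n')%N : option 'I_m) with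
      | Some j => let l := g.2 j in (l * n' + leafmap (g.1 l) (p %% n'))%N
      | None => p end
  end.

(* Row p of a matrix (0 if out of range). *)
Definition rowat (R : nzRingType) (N d : nat) (x : 'M[R]_(N, d)) (p : nat)
  : 'rV[R]_d :=
  match (insub p : option 'I_N) with Some p' => row p' x | None => 0 end.

Definition inF (T : Type) (m : nat) (pts : nat -> T) : Prop :=
  forall i j, (i < m)%N -> (j < m)%N -> pts i = pts j -> i = j.

Fixpoint inC (T : Type) (rs : seq nat) (pts : nat -> T) : Prop :=
  match rs with
  | [::] => True
  | m :: rs' =>
      (forall j, (j < m)%N -> inC rs' (fun i => pts (j * Npts rs' + i)%N))
      /\ inF m (fun i => pts (Npts rs' * m + i)%N)
  end.

Definition Cspace (R : realType) (d : nat) (rs : seq nat)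
  : set 'M[R]_(Npts rs, d) := [set x | inC rs (rowat x)].
Arguments Cspace : clear implicits.

(* The leaves below the top-level point y_j are placed at
   y_j + (c/2) z/(1+|z|), where z runs over the configuration built
   recursively from block j and c = prod_{a <> b} min(1, |y_a - y_b|).
   The map z |-> z/(1+|z|) is an injection into the open unit ball, and c is a
   continuous, permutation-invariant, positive lower bound for the distances
   between the y_a, so the balls of radius c/2 around distinct y_j are
   disjoint; hence the leaves are pairwise distinct and depend continuously
   and equivariantly on the configuration. *)

From HB Require Import structures.
From mathcomp Require Import all_boot all_order all_algebra all_fingroup.
From mathcomp Require Import all_classical all_reals all_analysis.
From mathcomp Require Import zify.

Set Implicit Arguments.
Unset Strict Implicit.
Unset Printing Implicit Defensive.

Import Order.TTheory GRing.Theory Num.Theory.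
Import numFieldNormedType.Exports.
Local Open Scope classical_set_scope.
Local Open Scope ring_scope.

Lemma block_index_lt l m r n : (l < m -> r < n -> l * n + r < n * m)%N.
Proof. nia. Qed.

Lemma block_decomp n m q : (q < n * m)%N ->
  [/\ (0 < n)%N, (q %/ n < m)%N & (q %% n < n)%N].
Proof.
move=> qnm; have n_gt0 : (0 < n)%N by case: n qnm.
by rewrite ltn_divLR // mulnC ltn_pmod.
Qed.

Lemma leafmap_lt rs (g : Sig rs) q :
  (q < nleaves rs)%N -> (leafmap g q < nleaves rs)%N.
Proof.
elim: rs g q => [|m rs IH] g q //= /block_decomp[_ jm im].
case: insubP => [j _ _|]; last by rewrite jm.
exact: block_index_lt (ltn_ord _) (IH _ _ im).
Qed.

Definition block_pts {T : Type} rs (pts : nat -> T) (j : nat) : nat -> T :=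
  fun i => pts (j * Npts rs + i)%N.

Definition top_pts {T : Type} rs m (pts : nat -> T) : nat -> T :=
  fun a => pts (Npts rs * m + a)%N.

Lemma posmap_top m rs (g : Sig (m :: rs)) (a : 'I_m) :
  posmap g (Npts rs * m + a)%N = (Npts rs * m + g.2 a)%N.
Proof.
rewrite /= ltnNge leq_addr /= addKn.
case: insubP => [b _ /val_inj-> //|]; by rewrite ltn_ord.
Qed.

Lemma posmap_block m rs (g : Sig (m :: rs)) (j : 'I_m) p : (p < Npts rs)%N ->
  posmap g (j * Npts rs + p)%N = (g.2 j * Npts rs + posmap (g.1 (g.2 j)) p)%N.
Proof.
move=> pN; have N_gt0 : (0 < Npts rs)%N by case: (Npts rs) pN.
rewrite /= (block_index_lt (ltn_ord j) pN) divnMDl // divn_small // addn0.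
rewrite modnMDl modn_small //.
case: insubP => [i _ /val_inj-> //|]; by rewrite ltn_ord.
Qed.

Lemma continuous_prod (K : numFieldType) (T : topologicalType) (I : Type)
    (r : seq I) (P : pred I) (G : I -> T -> K) :
  (forall i, continuous (G i)) -> continuous (fun t => \prod_(i <- r | P i) G i t).
Proof.
move=> G_cont; elim: r => [|i r IH].
  by under eq_fun do rewrite big_nil; exact: cst_continuous.
under eq_fun do rewrite big_cons.
by case: (P i) => // t; apply: continuousM; [exact: G_cont | exact: IH].
Qed.

Section Shrink.
Variables (K : numFieldType) (V : normedModType K).

Definition shrink (z : V) : V := (1 + `|z|)^-1 *: z.
Definition unshrink (w : V) : V := (1 - `|w|)^-1 *: w.

Let one_add_norm_gt0 (z : V) : 0 < 1 + `|z|.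
Proof. by rewrite ltr_pwDl. Qed.

Lemma norm_shrink (z : V) : `|shrink z| = `|z| / (1 + `|z|).
Proof. by rewrite normrZ ger0_norm ?invr_ge0 ?ltW // mulrC. Qed.

Lemma norm_shrink_lt1 (z : V) : `|shrink z| < 1.
Proof. by rewrite norm_shrink ltr_pdivrMr // mul1r ltrDr. Qed.

Lemma shrinkK : cancel shrink unshrink.
Proof.
move=> z; have s0 := one_add_norm_gt0 z; rewrite /unshrink.
have -> : 1 - `|shrink z| = (1 + `|z|)^-1.
  by rewrite norm_shrink -[X in X - _](divff (lt0r_neq0 s0)) -mulrBl addrK mul1r.
by rewrite /shrink invrK scalerA divff ?gt_eqF // scale1r.
Qed.

Lemma shrink_inj : injective shrink.
Proof. exact: can_inj shrinkK. Qed.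

Lemma continuous_shrink : continuous shrink.
Proof.
move=> z; apply: (@continuousZ _ _ _ (fun z : V => (1 + `|z|)^-1) id); last exact: cvg_id.
apply: continuousV; first by rewrite gt_eqF.
by apply: continuousD; [exact: cst_continuous | exact: norm_continuous].
Qed.

Lemma dist_lt_of_shrink_eq (a b u v : V) (c : K) : 0 < c ->
  a + (c / 2) *: shrink u = b + (c / 2) *: shrink v -> `|a - b| < c.
Proof.
move=> c0 E; have -> : a - b = (c / 2) *: (shrink v - shrink u).
  have -> : a = b + (c / 2) *: shrink v - (c / 2) *: shrink u by rewrite -E addrK.
  by rewrite scalerBr addrAC [b + _]addrC addrK.
rewrite normrZ ger0_norm ?divr_ge0 ?ltW //.
rewrite -[ltRHS](@divfK _ 2) ?pnatr_eq0 // ltr_pM2l ?divr_gt0 //.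
by rewrite (le_lt_trans (ler_normB _ _)) // ltrD // norm_shrink_lt1.
Qed.

End Shrink.

Section LeafConfiguration.
Variables (R : realType) (V : normedModType R).

Definition separation (m : nat) (y : nat -> V) : R :=
  \prod_(ab : 'I_m * 'I_m | ab.1 != ab.2) Num.min 1 `|y ab.1 - y ab.2|.

Let min1_norm_ge0_le1 (v : V) : 0 <= Num.min 1 `|v| <= 1.
Proof. by rewrite le_min ler01 normr_ge0 ge_min lexx. Qed.

Lemma separation_le_dist m (y : nat -> V) (a b : 'I_m) :
  a != b -> separation m y <= `|y a - y b|.
Proof.
move=> ab; rewrite /separation (bigD1 (a, b)) //=.
apply: (le_trans (ler_piMr _ _)); last by rewrite ge_min lexx orbT.
- by case/andP: (min1_norm_ge0_le1 (y a - y b)).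
- by apply: prodr_ile1 => ? _; exact: min1_norm_ge0_le1.
Qed.

Lemma separation_gt0 m (y : nat -> V) : inF m y -> 0 < separation m y.
Proof.
move=> y_inj; apply: prodr_gt0 => -[a b] /= ab.
rewrite lt_min ltr01 normr_gt0 subr_eq0; apply: contra ab => /eqP/y_inj yab.
by apply/eqP/val_inj/yab.
Qed.

Lemma separation_perm m (s : 'S_m) (y y' : nat -> V) :
  (forall a : 'I_m, y' (s a) = y a) -> separation m y' = separation m y.
Proof.
move=> yy'; pose s2 (ab : 'I_m * 'I_m) := (s ab.1, s ab.2).
have s2_inj : injective s2 by move=> [? ?] [? ?] [/perm_inj-> /perm_inj->].
rewrite /separation (reindex_inj s2_inj) /=.
by apply: eq_big => [ab|ab _]; rewrite ?(inj_eq perm_inj) ?yy'.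
Qed.

Lemma continuous_separation m (T : topologicalType) (y : T -> nat -> V) :
  (forall p, continuous (y ^~ p)) -> continuous (fun t => separation m (y t)).
Proof.
move=> yc; apply: continuous_prod => -[a b] t.
apply: (@continuous_min R T (fun=> 1) (fun t => `|y t a - y t b|)).
  exact: cst_continuous.
apply: (@continuous_comp _ _ _ (fun t => y t a - y t b) Num.norm).
  by apply: continuousB; exact: yc.
exact: norm_continuous.
Qed.

Fixpoint leaf_config (rs : seq nat) (pts : nat -> V) : nat -> V :=
  match rs with
  | [::] => fun=> 0
  | m :: rs' => fun q =>
      let j := (q %/ nleaves rs')%N in
      top_pts rs' m pts j + (separation m (top_pts rs' m pts) / 2) *:
        shrink (leaf_config rs' (block_pts rs' pts j) (q %% nleaves rs'))
  end.

Lemma leaf_config_inF rs pts : inC rs pts -> inF (nleaves rs) (leaf_config rs pts).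
Proof.
elim: rs pts => [|m rs IH] pts /=.
  by move=> _ i j; rewrite !ltnS !leqn0 => /eqP-> /eqP->.
case=> blocks_inC top_inF q1 q2 /block_decomp[_ j1m i1n] /block_decomp[_ j2m i2n].
have sep_gt0 : 0 < separation m (top_pts rs m pts) by exact: separation_gt0.
have [j12 E|j12 E] := eqVneq (q1 %/ nleaves rs)%N (q2 %/ nleaves rs)%N.
  have c_neq0 : separation m (top_pts rs m pts) / 2 != 0.
    by rewrite mulf_neq0 ?invr_eq0 ?gt_eqF.
  rewrite j12 in E; move/addrI/(scalerI c_neq0)/shrink_inj: E.
  move/(IH _ (blocks_inC _ j2m) _ _ i1n i2n) => i12.
  by rewrite (divn_eq q1 (nleaves rs)) (divn_eq q2 (nleaves rs)) j12 i12.
have := @separation_le_dist _ (top_pts rs m pts) (Ordinal j1m) (Ordinal j2m).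
rewrite -(inj_eq val_inj) /= => /(_ j12).
by rewrite leNgt (dist_lt_of_shrink_eq sep_gt0 E).
Qed.

Lemma leaf_config_equivariant rs (g : Sig rs) (pts pts' : nat -> V) :
  (forall p, (p < Npts rs)%N -> pts' (posmap g p) = pts p) ->
  forall q, (q < nleaves rs)%N ->
    leaf_config rs pts' (leafmap g q) = leaf_config rs pts q.
Proof.
elim: rs g pts pts' => [|m rs IH] g pts pts' g_pts q //= /block_decomp[n_gt0 jm im].
case: insubP => [j _ vj|]; last by rewrite jm.
rewrite divnMDl // divn_small ?leafmap_lt // addn0 modnMDl modn_small ?leafmap_lt //.
have top_perm (a : 'I_m) : top_pts rs m pts' (g.2 a) = top_pts rs m pts a.
  by rewrite /top_pts -posmap_top g_pts // ltn_add2l.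
rewrite top_perm -vj (separation_perm top_perm); congr (_ + _ *: shrink _).
apply: IH im => p pN; rewrite /block_pts -posmap_block // g_pts //.
by rewrite (leq_trans (block_index_lt (ltn_ord j) pN)) // leq_addr.
Qed.

Lemma continuous_leaf_config rs (T : topologicalType) (pts : T -> nat -> V) :
  (forall p, continuous (pts ^~ p)) ->
  forall q, continuous (fun t => leaf_config rs (pts t) q).
Proof.
elim: rs T pts => [|m rs IH] T pts pts_cont q /=; first exact: cst_continuous.
move=> t; apply: (continuousD (f := pts ^~ _)); first exact: pts_cont.
apply: continuousZ.
  have sep_cont : continuous (fun x => separation m (top_pts rs m (pts x))).
    by apply: continuous_separation => p; exact: pts_cont.
  by apply: (continuousM (sep_cont t)); exact: cst_continuous.
have blocks_cont := IH _ (fun t => block_pts rs (pts t) (q %/ nleaves rs)).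
apply: (continuous_comp (blocks_cont (fun p => pts_cont _) _ t)).
exact: continuous_shrink.
Qed.

End LeafConfiguration.

Section MatrixContinuity.
Variables (K : numFieldType) (T : topologicalType).

Lemma continuous_mx_entries m n (f : T -> 'M[K]_(m, n)) :
  (forall i j, continuous (fun t => f t i j)) -> continuous f.
Proof.
move=> f_cont t; apply/cvg_mx_entourageP => A entA.
apply: filter_forall => i; apply: filter_forall => j.
have /cvg_entourageP/(_ _ entA) near_fij := f_cont i j t.
by apply: (@filterS _ (nbhs t) _ _ _ _ near_fij) => s /=; rewrite inE.
Qed.

Lemma continuous_matrix_of_rows m n (E : T -> 'I_m -> 'rV[K]_n) :
  (forall i, continuous (E ^~ i)) -> continuous (fun t => \matrix_i E t i).
Proof.
move=> E_cont; apply: continuous_mx_entries => i j t.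
under eq_fun do rewrite mxE.
apply: (@continuous_comp _ _ _ (E ^~ i) (fun v : 'rV[K]_n => v 0 j)).
  exact: E_cont.
exact: coord_continuous.
Qed.

End MatrixContinuity.

Lemma continuous_rowat (K : numFieldType) N d p :
  continuous (fun x : 'M[K]_(N, d) => rowat x p).
Proof.
rewrite /rowat; case: insub => [p'|]; last exact: cst_continuous.
apply: continuous_mx_entries => i j.
under eq_fun do rewrite mxE; exact: coord_continuous.
Qed.

Lemma rowat_matrix (K : nzRingType) N d (E : nat -> 'rV[K]_d) q : (q < N)%N ->
  rowat (\matrix_(i < N) E i) q = E q.
Proof. by move=> qN; rewrite /rowat insubT rowK. Qed.

Lemma nleaves_prod rs : nleaves rs = (\prod_(m <- rs) m)%N.
Proof. by elim: rs => [|m rs IH] /=; rewrite ?big_nil // big_cons IH mulnC. Qed.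

Theorem lemma4p3 (R : realType) (d : nat) (ns : seq nat) :
  (1 <= size ns)%N -> (1 <= d)%N -> all (fun m => 2 <= m)%N ns ->
  exists f : 'M[R]_(Npts (rev ns), d) -> 'M[R]_(\prod_(m <- ns) m, d),
    {within Cspace R d (rev ns), continuous f} /\
    (forall x, Cspace R d (rev ns) x ->
       inF (\prod_(m <- ns) m)%N (rowat (f x))) /\
    (forall (g : Sig (rev ns)) (x y : 'M[R]_(Npts (rev ns), d)),
       Cspace R d (rev ns) x ->
       (forall p, (p < Npts (rev ns))%N -> rowat y (posmap g p) = rowat x p) ->
       forall q, (q < \prod_(m <- ns) m)%N ->
         rowat (f y) (leafmap g q) = rowat (f x) q).
Proof.
move=> _ _ _.
have leaves : nleaves (rev ns) = (\prod_(m <- ns) m)%N by rewrite nleaves_prod big_rev.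
pose f (x : 'M[R]_(Npts (rev ns), d)) : 'M[R]_(\prod_(m <- ns) m, d) :=
  \matrix_q leaf_config (rev ns) (rowat x) q.
have rowat_f x q : (q < \prod_(m <- ns) m)%N ->
    rowat (f x) q = leaf_config (rev ns) (rowat x) q by exact: rowat_matrix.
exists f; split; [|split].
- apply/continuous_subspaceT/continuous_matrix_of_rows => q.
  by apply: continuous_leaf_config => p; exact: continuous_rowat.
- move=> x Cx i j iN jN; rewrite !rowat_f //.
  by apply: leaf_config_inF; rewrite ?leaves.
- move=> g x y _ gyx q qN; rewrite -leaves in qN.
  rewrite !rowat_f -?leaves ?leafmap_lt //.
  exact: leaf_config_equivariant.
Qed.
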